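(* Let $(G,c)$ be an edge-colored DAG, $G=(V,E)$, and suppose $ij\in E$ is covered, i.e. $\mathrm{pa}_G(j)=\mathrm{pa}_G(i)\cup\{i\}$. Let $G_{i\leftarrow j}$ be the DAG obtained by reversing $ij$ to $ji$, and color it by $c_{i\leftarrow j}(kl)=c(kl)$ for $kl\neq ji$ and $c_{i\leftarrow j}(ji)=c(ij)$ (vertices keeping distinct colors). If there is an edge $kl$ with $c(kl)=c(ij)$ and $l\notin\{i,j\}$, then $\mathcal M(G_{i\leftarrow j},c_{i\leftarrow j})\neq\mathcal M(G,c)$.
   Context: An edge-colored DAG $(G,c)$ has a map $c$ on $V\sqcup E$ in which every vertex forms its own color class. $\mathcal M(G,c)$ is the set of $(I-\Lambda)^{-T}\Omega(I-\Lambda)^{-1}$ with $\Omega=\mathrm{diag}(\omega_i)$, $\omega_i>0$, $\lambda_{ij}=0$ for $ij\notin E$, and $\lambda_{ij}=\lambda_{kl}$ whenever $c(ij)=c(kl)$. *)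

From HB Require Import structures.
From mathcomp Require Import all_boot all_order all_algebra.
From mathcomp Require Import Rstruct.
From Stdlib Require Import Reals.
Set Implicit Arguments. Unset Strict Implicit. Unset Printing Implicit Defensive.
Import Order.TTheory GRing.Theory Num.Theory.
Local Open Scope ring_scope.

(* A directed graph on vertex set 'I_n is an edge relation E : rel 'I_n
   (E k l means the edge k -> l, written kl in the paper). *)

Definition is_dag n (E : rel 'I_n) : Prop :=
  forall k l, E k l -> ~~ connect E l k.

Definition covered n (E : rel 'I_n) (i j : 'I_n) : Prop :=
  E i j /\ forall k, E k j = (E k i || (k == i)).

(* Edge colouring: c k l is the colour of edge kl (only values on edges
   matter).  Vertices form singleton colour classes, so they impose no
   constraint and are not represented. *)

Definition model n (E : rel 'I_n) (c : 'I_n -> 'I_n -> nat) : 'M[R]_n -> Prop :=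
  fun S => exists (L : 'M[R]_n) (w : 'I_n -> R),
    (forall k, 0 < w k) /\
    (forall k l, ~~ E k l -> L k l = 0) /\
    (forall k l k' l', E k l -> E k' l' -> c k l = c k' l' -> L k l = L k' l') /\
    S = (invmx (1%:M - L))^T *m diag_mx (\row_k w k) *m invmx (1%:M - L).

Definition rev_edge n (E : rel 'I_n) (i j : 'I_n) : rel 'I_n :=
  fun k l => if (k == j) && (l == i) then true
             else if (k == i) && (l == j) then false
             else E k l.

Definition rev_col n (c : 'I_n -> 'I_n -> nat) (i j : 'I_n) :
    'I_n -> 'I_n -> nat :=
  fun k l => if (k == j) && (l == i) then c i j else c k l.

(* Take Sigma = (I - L)^-T (I - L)^-1 with L equal to 1 on every edge of the colour
   class of ij and 0 elsewhere.  For any parametrisation of a covariance matrix by a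
   DAG, column r of I - L is the unique vector with r-th entry 1, supported on
   pa(r) u {r}, whose image under Sigma vanishes on pa(r) (the normal equations of
   the regression of r on its parents).  After reversing ij the vertex l keeps its
   parents, so the coefficient of kl is still 1; but i now has parents
   pa(i) u {j}, and its normal equations are solved by (col i - col j) / 2, which
   puts the coefficient 1/2 on ji.  As ji and kl share a colour in c_{i<-j},
   Sigma is not in the reversed model. *)

From Stdlib Require Import Reals.
From HB Require Import structures.
From mathcomp Require Import all_boot all_order all_algebra.
From mathcomp Require Import Rstruct.
From mathcomp Require Import zify ring lra.

Set Implicit Arguments. Unset Strict Implicit. Unset Printing Implicit Defensive.
Import Order.TTheory GRing.Theory Num.Theory.
Local Open Scope ring_scope.

Definition supported n (E : rel 'I_n) (L : 'M[R]_n) : Prop :=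
  forall p q, ~~ E p q -> L p q = 0.

Definition ranked n (f : 'I_n -> nat) (E : rel 'I_n) : Prop :=
  forall p q, E p q -> (f p < f q)%N.

Section UnitriangularInverse.

Variables (n : nat) (E : rel 'I_n) (f : 'I_n -> nat) (L : 'M[R]_n).
Hypotheses (suppL : supported E L) (rankE : ranked f E).

Lemma expmx_ranked m p q : (L ^+ m) p q != 0 -> (f p + m <= f q)%N.
Proof.
elim: m p q => [|m IHm] p q.
  rewrite expr0 -idmxE mxE; case: (eqVneq p q) => [->|_]; first by rewrite addn0.
  by rewrite eqxx.
rewrite exprSr -mulmxE mxE => /eqP /eqP nz_sum.
have [s /andP[nz_pow nz_L]]: exists s, ((L ^+ m) p s != 0) && (L s q != 0).
  apply/existsP; apply: contraR nz_sum => /existsPn no_s; apply/eqP.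
  by apply: big1 => s _; move: (no_s s); rewrite negb_and !negbK => /orP[] /eqP ->;
    rewrite ?mul0r ?mulr0.
have Esq : E s q by apply: contraNT nz_L => /suppL ->.
by have := IHm _ _ nz_pow; have := rankE Esq; lia.
Qed.

Lemma expmx_ranked_eq0 m p q : (f q < f p + m)%N -> (L ^+ m) p q = 0.
Proof. by move=> lt_q; apply/eqP; apply: contraTT lt_q => /expmx_ranked; lia. Qed.

Let B := (\max_x f x).+1.

Lemma ranked_nilpotent : L ^+ B = 0.
Proof.
apply/matrixP => p q; rewrite mxE; apply: expmx_ranked_eq0.
have := @leq_bigmax _ f q; lia.
Qed.

Lemma one_sub_mul_geometric : (1%:M - L) *m \sum_(m < B) L ^+ m = 1%:M.
Proof. by rewrite idmxE mulmxE -opprB mulNr -subrX1 ranked_nilpotent sub0r opprK. Qed.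

Lemma unitmx_one_sub : 1%:M - L \in unitmx.
Proof. by case: (mulmx1_unit one_sub_mul_geometric). Qed.

Lemma invmx_one_sub_geometric : invmx (1%:M - L) = \sum_(m < B) L ^+ m.
Proof.
by rewrite -[LHS]mulmx1 -[X in _ *m X]one_sub_mul_geometric mulKmx ?unitmx_one_sub.
Qed.

Lemma invmx_one_sub_ranked r p : (f p < f r)%N -> invmx (1%:M - L) r p = 0.
Proof.
move=> lt_pr; rewrite invmx_one_sub_geometric summxE.
by apply: big1 => m _; apply: expmx_ranked_eq0; lia.
Qed.

Lemma invmx_one_sub_diag r : invmx (1%:M - L) r r = 1.
Proof.
rewrite invmx_one_sub_geometric summxE big_ord_recl expr0 -idmxE mxE eqxx.
by rewrite big1 ?addr0 // => m _; apply: expmx_ranked_eq0; rewrite lift0 /=; lia.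
Qed.

End UnitriangularInverse.

Lemma gram_perp_eq0 n (A : 'M[R]_n) (v : 'cV[R]_n) : A \in unitmx ->
  (forall p, v p 0 = 0 \/ (A^T *m A *m v) p 0 = 0) -> v = 0.
Proof.
move=> unitA perp.
have quad0 : (v^T *m (A^T *m A *m v)) 0 0 = 0.
  rewrite mxE; apply: big1 => p _; rewrite mxE.
  by case: (perp p) => ->; rewrite ?mul0r ?mulr0.
have Av0 : A *m v = 0.
  have sum_sq0 : \sum_q (A *m v) q 0 ^+ 2 = 0.
    have gram : v^T *m (A^T *m A *m v) = (A *m v)^T *m (A *m v).
      by rewrite trmx_mul !mulmxA.
    by rewrite -[RHS]quad0 gram mxE; apply: eq_bigr => q _; rewrite !mxE expr2.
  apply/matrixP => r s; rewrite ord1 [RHS]mxE; apply/eqP; rewrite -sqrf_eq0.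
  by apply/eqP; move/psumr_eq0P: sum_sq0 => -> // q _; apply: sqr_ge0.
by rewrite -[v]mul1mx -(mulVmx unitA) -mulmxA Av0 mulmx0.
Qed.

Lemma mulmx_cov_entry n (M : 'M[R]_n) (w : 'rV[R]_n) p r : M \in unitmx ->
  ((invmx M)^T *m diag_mx w *m invmx M *m M) p r = invmx M r p * w 0 r.
Proof. by move=> unitM; rewrite -mulmxA mulVmx // mulmx1 mul_mx_diag !mxE. Qed.

Lemma normal_equations_col n (E : rel 'I_n) (f : 'I_n -> nat) (L A : 'M[R]_n)
    (w : 'rV[R]_n) (x : 'cV[R]_n) r :
  supported E L -> ranked f E -> A \in unitmx ->
  A^T *m A = (invmx (1%:M - L))^T *m diag_mx w *m invmx (1%:M - L) ->
  (forall p, ~~ E p r -> x p 0 = (p == r)%:R) ->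
  (forall p, E p r -> (A^T *m A *m x) p 0 = 0) ->
  x = col r (1%:M - L).
Proof.
move=> suppL rankE unitA covE x_out x_in.
apply/eqP; rewrite -subr_eq0; apply/eqP; apply: (gram_perp_eq0 unitA) => p.
have [Epr|nEpr] := boolP (E p r).
  right; have -> : (A^T *m A *m (x - col r (1%:M - L))) p 0 =
                   (A^T *m A *m x) p 0 - (A^T *m A *m (1%:M - L)) p r.
    by rewrite mulmxBr colE mulmxA -colE !mxE.
  rewrite x_in // covE mulmx_cov_entry ?(unitmx_one_sub suppL rankE) //.
  by rewrite (invmx_one_sub_ranked suppL rankE) ?rankE // mul0r subrr.
by left; rewrite !mxE x_out // suppL // subr0 subrr.
Qed.

Lemma ranked_irrefl n (E : rel 'I_n) f p : ranked f E -> ~~ E p p.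
Proof. by move=> rankE; apply/negP => /rankE; rewrite ltnn. Qed.

Definition ancestor_rank n (E : rel 'I_n) (x : 'I_n) : nat :=
  #|[pred y | connect E y x]|.

Lemma ancestor_rank_ranked n (E : rel 'I_n) : is_dag E -> ranked (ancestor_rank E) E.
Proof.
move=> dagE p q Epq; apply: proper_card; apply/properP; split.
  by apply/subsetP => y; rewrite !inE => /connect_trans; apply; apply: connect1.
by exists q; rewrite !inE ?connect0 //; apply: dagE.
Qed.

Section ReversedEdge.

Variables (n : nat) (E : rel 'I_n) (i j : 'I_n).

Lemma rev_edge_reversed : rev_edge E i j j i.
Proof. by rewrite /rev_edge !eqxx. Qed.

Lemma rev_edge_other p q : q != i -> q != j -> rev_edge E i j p q = E p q.
Proof. by move=> /negbTE qi /negbTE qj; rewrite /rev_edge qi qj !andbF. Qed.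

Lemma rev_edge_to_tail p : i != j -> rev_edge E i j p i = (p == j) || E p i.
Proof. by move=> /negbTE ij; rewrite /rev_edge eqxx ij andbT andbF; case: eqP. Qed.

(* Doubling the rank leaves room to put [j] immediately before [i]. *)
Definition rev_rank (f : 'I_n -> nat) (x : 'I_n) : nat :=
  if x == i then (2 * f i).+1 else if x == j then (2 * f i)%N else (2 * f x)%N.

Lemma ranked_rev_edge f : covered E i j -> ranked f E ->
  ranked (rev_rank f) (rev_edge E i j).
Proof.
move=> [Eij paj] rankE p q; have fij := rankE _ _ Eij.
have ji : (j == i) = false.
  by apply/eqP => eji; move: Eij; rewrite eji (negbTE (ranked_irrefl i rankE)).
rewrite /rev_edge /rev_rank.
have [->|pj] := eqVneq p j.
  rewrite ji; have [//|qi] := eqVneq q i.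
  have [->|qj] := eqVneq q j; first by rewrite (negbTE (ranked_irrefl j rankE)).
  by move=> /rankE; lia.
have [->|pi] := eqVneq p i.
  have [//|qj] := eqVneq q j.
  have [->|qi] := eqVneq q i; first by rewrite (negbTE (ranked_irrefl i rankE)).
  by move=> /rankE; lia.
have [->|qi] := eqVneq q i; first by move=> /rankE; lia.
have [->|qj] := eqVneq q j; last by move=> /rankE; lia.
by rewrite paj (negbTE pi) orbF => /rankE; lia.
Qed.

End ReversedEdge.

Lemma invmx_one_sub_expand n (L : 'M[R]_n) : 1%:M - L \in unitmx ->
  invmx (1%:M - L) = 1%:M + invmx (1%:M - L) *m L.
Proof.
by move=> /mulVmx; rewrite mulmxBr mulmx1 => /eqP; rewrite subr_eq => /eqP.
Qed.

Section CoveredEdgeReversal.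

Variables (n : nat) (E : rel 'I_n) (c : 'I_n -> 'I_n -> nat) (i j : 'I_n).
Hypotheses (dagE : is_dag E) (covE : covered E i j).

Let f := ancestor_rank E.
Let rankE : ranked f E := ancestor_rank_ranked dagE.

Definition color_class_mx : 'M[R]_n :=
  \matrix_(p, q) (if E p q && (c p q == c i j) then 1 else 0).
Local Notation N := (1%:M - color_class_mx).
Definition witness_cov : 'M[R]_n := (invmx N)^T *m invmx N.

Lemma color_class_mx_supported : supported E color_class_mx.
Proof. by move=> p q /negbTE Epq; rewrite mxE Epq. Qed.

Let unitN : N \in unitmx := unitmx_one_sub color_class_mx_supported rankE.
Let invN_ranked := invmx_one_sub_ranked color_class_mx_supported rankE.
Let invN_diag := invmx_one_sub_diag color_class_mx_supported rankE.

Lemma witness_cov_in_model : model E c witness_cov.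
Proof.
exists color_class_mx, (fun=> 1); split=> [p|]; first exact: ltr01.
split; first exact: color_class_mx_supported.
split=> [p q p' q' Epq Ep'q' cpq|].
  by rewrite !mxE Epq Ep'q' cpq.
suff -> : diag_mx (\row_k 1) = 1%:M :> 'M[R]_n by rewrite mulmx1.
by apply/matrixP => p q; rewrite !mxE.
Qed.

Lemma witness_cov_mulmx_col r p : (witness_cov *m col r N) p 0 = invmx N r p.
Proof.
by rewrite /witness_cov colE !mulmxA -(mulmxA _ (invmx N)) mulVmx // mulmx1 -colE !mxE.
Qed.

Let Eij : E i j := covE.1.
Let paj : forall p, E p j = E p i || (p == i) := covE.2.

Let neq_ij : i != j.
Proof. by apply: contraTneq Eij => ->; apply: ranked_irrefl rankE. Qed.

Lemma invmx_witness_covered : invmx N i j = 1.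
Proof.
rewrite invmx_one_sub_expand // !mxE (negbTE neq_ij) add0r (bigD1 i) //=.
rewrite invN_diag mxE Eij eqxx mul1r big1 ?addr0 // => q qi.
case Eqj: (E q j); last by rewrite mxE Eqj mulr0.
rewrite invN_ranked ?mul0r //; apply: rankE.
by rewrite paj (negbTE qi) orbF in Eqj.
Qed.

Variables (L' : 'M[R]_n) (w' : 'I_n -> R).
Hypotheses (suppL' : supported (rev_edge E i j) L')
  (covL' : witness_cov =
     (invmx (1%:M - L'))^T *m diag_mx (\row_k w' k) *m invmx (1%:M - L')).

Let rankE' := ranked_rev_edge covE rankE.
Let unit_invN : invmx N \in unitmx. Proof. by rewrite unitmx_inv. Qed.

Lemma rev_coef_same_color k l :
  E k l -> c k l = c i j -> l != i -> l != j -> L' k l = 1.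
Proof.
move=> Ekl ckl li lj.
have col_eq : col l N = col l (1%:M - L').
  apply: normal_equations_col suppL' rankE' unit_invN covL' _ _ => p.
    by rewrite rev_edge_other // => /negbTE nEpl; rewrite !mxE nEpl subr0.
  by rewrite rev_edge_other // witness_cov_mulmx_col => /rankE /invN_ranked.
move/(congr1 (fun v : 'cV[R]_n => v k 0)): col_eq.
by rewrite !mxE Ekl ckl eqxx => /addrI /oppr_inj.
Qed.

Lemma rev_coef_reversed : L' j i = 2^-1.
Proof.
have nEji : ~~ E j i by apply: contraTN (rankE Eij) => /rankE; lia.
set x : 'cV[R]_n := 2^-1 *: (col i N - col j N).
have Sx p : (witness_cov *m x) p 0 = 2^-1 * (invmx N i p - invmx N j p).
  by rewrite -!witness_cov_mulmx_col -scalemxAr mulmxBr !mxE.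
have col_eq : x = col i (1%:M - L').
  apply: normal_equations_col suppL' rankE' unit_invN covL' _ _ => p.
    rewrite rev_edge_to_tail // negb_or => /andP[/negbTE pj /negbTE nEpi].
    rewrite !mxE pj nEpi /=; have [->|/negbTE pi] := eqVneq p i.
      by rewrite Eij eqxx /=; field.
    by rewrite paj nEpi pi /= !subrr mulr0.
  rewrite rev_edge_to_tail // Sx => /orP[/eqP->|/rankE Epi].
    by rewrite invmx_witness_covered invN_diag subrr mulr0.
  by rewrite !invN_ranked ?subrr ?mulr0 //; have := rankE Eij; lia.
move/(congr1 (fun v : 'cV[R]_n => v j 0)): col_eq.
rewrite !mxE (negbTE nEji) (negbTE (ranked_irrefl j rankE)).
by rewrite eq_sym (negbTE neq_ij) eqxx /= => coef_eq; lra.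
Qed.

End CoveredEdgeReversal.

Theorem lemma5p7 (n : nat) (E : rel 'I_n) (c : 'I_n -> 'I_n -> nat)
    (i j : 'I_n) :
  is_dag E -> covered E i j ->
  (exists k l : 'I_n, [/\ E k l, c k l = c i j, l != i & l != j]) ->
  ~ (forall S : 'M[R]_n,
       model (rev_edge E i j) (rev_col c i j) S <-> model E c S).
Proof.
move=> dagE covE [k [l [Ekl ckl li lj]]] same_model.
have [L' [w' [_ [suppL' [colL' covL']]]]] :=
  (same_model _).2 (witness_cov_in_model E c i j).
have same_color : rev_col c i j j i = rev_col c i j k l.
  by rewrite /rev_col !eqxx (negbTE li) andbF ckl.
have E'kl : rev_edge E i j k l by rewrite rev_edge_other.
have := colL' _ _ _ _ (rev_edge_reversed E i j) E'kl same_color.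
rewrite (rev_coef_reversed dagE covE suppL' covL').
by rewrite (rev_coef_same_color dagE covE suppL' covL' Ekl ckl li lj); lra.
Qed.
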